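(* Let $g_1,g_2$ be monic divisors of $x^m-1$ over $\mathbb{F}_{q^2}$ and $v\in\mathcal{R}$ with $\gcd(v^2-1,x^m-1)=1$, and let $\mathcal{D}_3$ be the QC code of length $2m$ over $\mathbb{F}_{q^2}$ generated by $(g_1,vg_1)$ and $(vg_2,g_2)$. Then $\mathcal{D}_3$ is Hermitian dual-containing iff $g_1\mid g_1^{\perp_H}(1+v\overline{v}^{[q]})$, $g_1\mid g_2^{\perp_H}(\overline{v}^{[q]}+v)$ and $g_2\mid g_2^{\perp_H}(1+v\overline{v}^{[q]})$.
   Context: $q$ a prime power; $\mathcal{R}=\mathbb{F}_{q^2}[x]/(x^m-1)$, elements identified with representatives of degree $<m$; $[k]=(k_0,\dots,k_{m-1})$; $\overline{k}(x)=k(x^{-1})\bmod(x^m-1)$; $k^{[q]}=\sum k_i^qx^i$; $f^*(x)=x^{\deg f}f(1/x)$; for $k\in\mathcal{R}$, $f=\frac{x^m-1}{\gcd(k,x^m-1)}$, $k^{\perp}=f(0)^{-1}f^*$, $k^{\perp_H}=(k^{[q]})^{\perp}$. ''$g\mid a$'' for $g\mid x^m-1$ means $g$ divides the representative of $a$. The QC code generated by $(u_{i1},u_{i2})$, $i=1,2$, is $\{([r_1u_{11}+r_2u_{21}],[r_1u_{12}+r_2u_{22}]):r_i\in\mathcal{R}\}$. Hermitian inner product $\sum u_i^qv_i$; dual-containing means $\mathcal{D}_3^{\perp_H}\subseteq\mathcal{D}_3$. *)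

From HB Require Import structures.
From mathcomp Require Import all_boot all_order all_algebra.
Set Implicit Arguments. Unset Strict Implicit. Unset Printing Implicit Defensive.
Import GRing.Theory.
Local Open Scope ring_scope.

(* R = F[x]/(x^m - 1), elements represented by polynomials
   of degree < m (i.e. size <= m). *)

Definition prime_power (q : nat) : Prop :=
  exists p k : nat, prime p /\ (0 < k)%N /\ q = (p ^ k)%N.

Section QC.
Variable F : fieldType.

Definition xm1 (m : nat) : {poly F} := 'X^m - 1.

Definition red (m : nat) (p : {poly F}) : {poly F} := p %% xm1 m.

(* kbar(x) = k(x^{-1}) mod (x^m - 1) *)
Definition barp (m : nat) (k : {poly F}) : {poly F} :=
  \poly_(i < m) (red m k)`_((m - i) %% m).

Definition frobp (q : nat) (k : {poly F}) : {poly F} :=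
  map_poly (fun a : F => a ^+ q) k.

Definition recip (f : {poly F}) : {poly F} :=
  \poly_(i < size f) f`_((size f).-1 - i).

Definition perp (m : nat) (k : {poly F}) : {poly F} :=
  let f := xm1 m %/ gcdp k (xm1 m) in (f`_0)^-1 *: recip f.

Definition perpH (q m : nat) (k : {poly F}) : {poly F} := perp m (frobp q k).

Definition cvec (m : nat) (k : {poly F}) : 'rV[F]_m := \row_(i < m) k`_i.

Definition inQC (m : nat) (u11 u12 u21 u22 : {poly F}) (w : 'rV[F]_(m + m)) : Prop :=
  exists r1 r2 : {poly F},
    w = row_mx (cvec m (red m (r1 * u11 + r2 * u21)))
               (cvec m (red m (r1 * u12 + r2 * u22))).

Definition hip (q n : nat) (u v : 'rV[F]_n) : F :=
  \sum_(i < n) (u 0 i) ^+ q * v 0 i.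

Definition herm_dual_containing (q n : nat) (C : 'rV[F]_n -> Prop) : Prop :=
  forall w : 'rV[F]_n, (forall c, C c -> hip q w c = 0) -> C w.

End QC.

Arguments xm1 {F} m.
Arguments red {F} m p.
Arguments barp {F} m k.
Arguments frobp {F} q k.
Arguments recip {F} f.
Arguments perp {F} m k.
Arguments perpH {F} q m k.
Arguments cvec {F} m k.
Arguments inQC {F} m u11 u12 u21 u22 w.
Arguments hip {F} q n u v.
Arguments herm_dual_containing {F} q n C.

From HB Require Import structures.
From mathcomp Require Import all_boot all_order all_algebra all_field.
From mathcomp Require Import ring zify.
Set Implicit Arguments.
Unset Strict Implicit.
Unset Printing Implicit Defensive.
Import GRing.Theory.
Local Open Scope ring_scope.

(* Work in F[x]/(N) with N = x^m - 1 and let tau be the ring involution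
   a(x) |-> a^[q](x^{-1}).  The Hermitian product of ([a1],[a2]) and ([b1],[b2])
   is the constant term of tau a1 * b1 + tau a2 * b2 modulo N, a nondegenerate
   form, so the Hermitian dual of D3 is the set of pairs with
   N | g1 (tau a1 + v tau a2) and N | g2 (v tau a1 + tau a2).  Since 1 - v^2 is
   a unit modulo N, D3 itself is the set of pairs with g1 | a1 - v a2 and
   g2 | a2 - v a1.  Writing h_i = N / g_i, the dual is generated by
   s h1 (1, -v) and s h2 (-v, 1) with s (1 - v^2) = 1 mod N, and these lie in
   D3 exactly under the three stated conditions, because g^perp_H is, up to a
   unit and a power of x, tau (N / g). *)

Section HermitianQC.
Variables (F : fieldType) (q m : nat).
Hypotheses (frobD : forall a b : F, (a + b) ^+ q = a ^+ q + b ^+ q)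
           (frobK : forall a : F, (a ^+ q) ^+ q = a)
           (m_gt0 : (0 < m)%N).

Definition frob (a : F) : F := a ^+ q.

Fact frob_is_zmod_morphism : zmod_morphism frob.
Proof. by move=> a b; apply/eqP; rewrite eq_sym subr_eq /frob -frobD subrK. Qed.
Fact frob_is_monoid_morphism : monoid_morphism frob.
Proof. by split=> [|a b]; rewrite /frob ?expr1n ?exprMn. Qed.
HB.instance Definition _ :=
  GRing.isZmodMorphism.Build F F frob frob_is_zmod_morphism.
HB.instance Definition _ :=
  GRing.isMonoidMorphism.Build F F frob frob_is_monoid_morphism.

Local Notation N := (xm1 m : {poly F}).

(** * Congruences modulo x^m - 1 *)

Lemma size_xm1 : size N = m.+1.
Proof. by rewrite /xm1 -polyC1 size_XnsubC. Qed.

Lemma xm1_neq0 : N != 0.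
Proof. by rewrite -size_poly_gt0 size_xm1. Qed.

Lemma map_frob_xm1 : map_poly frob N = N.
Proof. by rewrite /xm1 rmorphB rmorph1 /= map_polyXn. Qed.

Lemma size_red (a : {poly F}) : (size (red m a) <= m)%N.
Proof. by rewrite -ltnS -size_xm1 ltn_modp xm1_neq0. Qed.

Definition eqm (a b : {poly F}) := N %| a - b.

Lemma eqm_refl a : eqm a a.
Proof. by rewrite /eqm subrr dvdp0. Qed.

Lemma eqm_sym a b : eqm a b -> eqm b a.
Proof. by rewrite /eqm -dvdpNr opprB. Qed.

Lemma eqm_trans a b c : eqm a b -> eqm b c -> eqm a c.
Proof. by rewrite /eqm => ab bc; rewrite -(subrK b a) -addrA dvdp_add. Qed.

Lemma eqmD a b c d : eqm a b -> eqm c d -> eqm (a + c) (b + d).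
Proof. by rewrite /eqm => ab cd; rewrite opprD addrACA dvdp_add. Qed.

Lemma eqmN a b : eqm a b -> eqm (- a) (- b).
Proof. by rewrite /eqm -opprD dvdpNr. Qed.

Lemma eqmB a b c d : eqm a b -> eqm c d -> eqm (a - c) (b - d).
Proof. by move=> ab cd; apply: eqmD ab (eqmN cd). Qed.

Lemma eqmM a b c d : eqm a b -> eqm c d -> eqm (a * c) (b * d).
Proof.
rewrite /eqm => ab cd.
have -> : a * c - b * d = a * (c - d) + (a - b) * d by ring.
by apply: dvdp_add; [apply: dvdp_mull | apply: dvdp_mulr].
Qed.

Lemma eqmZ c a b : eqm a b -> eqm (c *: a) (c *: b).
Proof. by rewrite -!mul_polyC; apply: eqmM (eqm_refl _). Qed.

Lemma eqmX a b i : eqm a b -> eqm (a ^+ i) (b ^+ i).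
Proof.
move=> ab; elim: i => [|i IHi]; first by rewrite !expr0 eqm_refl.
by rewrite !exprS eqmM.
Qed.

Lemma eqm_sum (I : Type) (r : seq I) (P : pred I) (f g : I -> {poly F}) :
  (forall i, P i -> eqm (f i) (g i)) ->
  eqm (\sum_(i <- r | P i) f i) (\sum_(i <- r | P i) g i).
Proof.
move=> fg; apply: (big_ind2 (fun x y => eqm x y)) => //; first exact: eqm_refl.
by move=> *; apply: eqmD.
Qed.

Lemma eqm_mod a : eqm (a %% N) a.
Proof.
rewrite /eqm {2}(divp_eq a N) opprD addrCA subrr addr0 -mulNr.
exact: dvdp_mull.
Qed.

Lemma eqm_modp a b : eqm a b -> a %% N = b %% N.
Proof. by move=> ab; rewrite -(subrK b a) modpD (modp_eq0 ab) add0r. Qed.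

Lemma eqm_dvd a b : eqm a b -> (N %| a) = (N %| b).
Proof. by move=> ab; rewrite -(subrK b a) dvdp_addr. Qed.

Lemma eqm_dvdp g a b : g %| N -> eqm a b -> (g %| a) = (g %| b).
Proof. by move=> gN ab; rewrite -(subrK b a) dvdp_addr // (dvdp_trans gN). Qed.

Lemma xm1_dvd_XmM j : N %| 'X^(m * j) - 1.
Proof. by rewrite exprM -(expr1n _ j) subrXX dvdp_mulr. Qed.

Lemma eqm_Xn_mod k : eqm 'X^k 'X^(k %% m).
Proof.
rewrite /eqm {1}(divn_eq k m) exprD mulnC -{2}['X^(k %% m)]mul1r -mulrBl.
exact/dvdp_mulr/xm1_dvd_XmM.
Qed.

Lemma eqm_Xn k l : (k %% m = l %% m)%N -> eqm 'X^k 'X^l.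
Proof.
move=> kl; apply: eqm_trans (eqm_Xn_mod k) _.
by rewrite kl; apply/eqm_sym/eqm_Xn_mod.
Qed.

Lemma modp_xm1_Xn k : 'X^k %% N = 'X^(k %% m).
Proof.
rewrite (eqm_modp (eqm_Xn_mod k)) modp_small // size_xm1 size_polyXn ltnS.
exact: ltn_pmod.
Qed.

Lemma eqm_comp_polyr p Y Y' : eqm Y Y' -> eqm (p \Po Y) (p \Po Y').
Proof. by move=> YY'; rewrite !comp_polyE; apply: eqm_sum => i _; apply/eqmZ/eqmX. Qed.

Lemma eqm_comp_polyXn p p' k : eqm p p' -> eqm (p \Po 'X^k) (p' \Po 'X^k).
Proof.
rewrite /eqm -comp_polyB => /dvdpP [c ->]; rewrite comp_polyM dvdp_mull //.
by rewrite /xm1 comp_polyB comp_Xn_poly comp_polyC -exprM mulnC xm1_dvd_XmM.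
Qed.

Lemma eqm_map_frob a b : eqm a b -> eqm (map_poly frob a) (map_poly frob b).
Proof.
rewrite /eqm -rmorphB => /dvdpP [c ->].
by rewrite rmorphM /= map_frob_xm1 dvdp_mull.
Qed.

(** * The conjugation tau and the constant-term form *)

(* x^(m-1) is the inverse of x modulo N. *)
Definition tau : {rmorphism {poly F} -> {poly F}} :=
  (map_poly frob \o comp_poly 'X^(m.-1))%FUN.

Lemma tauE p : tau p = map_poly frob (p \Po 'X^(m.-1)).
Proof. by []. Qed.

Lemma tau_Xn k : tau 'X^k = 'X^(k * m.-1).
Proof. by rewrite tauE comp_Xn_poly -exprM mulnC map_polyXn. Qed.

Lemma tauZ c p : tau (c *: p) = c ^+ q *: tau p.
Proof. by rewrite -!mul_polyC rmorphM [tau _%:P]tauE comp_polyC map_polyC. Qed.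

Lemma eqm_tau a b : eqm a b -> eqm (tau a) (tau b).
Proof. by move=> ab; rewrite !tauE; apply/eqm_map_frob/eqm_comp_polyXn. Qed.

Lemma tauK_eqm a : eqm (tau (tau a)) a.
Proof.
rewrite !tauE map_comp_poly map_polyXn -map_poly_comp.
rewrite map_poly_id => [|x _]; last by rewrite /= /frob frobK.
rewrite -comp_polyA comp_Xn_poly -exprM -[X in eqm _ X]comp_polyXr.
apply/eqm_comp_polyr; rewrite -[X in eqm _ X]expr1; apply: eqm_Xn.
case: m m_gt0 => // [[|n]] _ //=.
by rewrite (_ : n.+1 * n.+1 = n * n.+2 + 1)%N ?modnMDl //; ring.
Qed.

Lemma dvd_xm1_tau a : (N %| tau a) = (N %| a).
Proof.
have tau_dvd b : N %| b -> N %| tau b.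
  by move=> Nb; have := @eqm_tau b 0; rewrite /eqm rmorph0 !subr0; apply.
apply/idP/idP => [/tau_dvd|]; last exact: tau_dvd.
by rewrite (eqm_dvd (tauK_eqm a)).
Qed.

Lemma modn_oppK j : (j < m)%N -> ((m - (m - j) %% m) %% m = j)%N.
Proof.
case: j => [|j] ltjm; first by rewrite subn0 modnn subn0 modnn.
rewrite (@modn_small (m - j.+1)); last by lia.
by rewrite (_ : m - (m - j.+1) = j.+1)%N ?modn_small //; lia.
Qed.

Lemma muln_predm_mod j : (j < m)%N -> ((j * m.-1) %% m = (m - j) %% m)%N.
Proof.
case: j => [|j] ltjm; first by rewrite mul0n mod0n subn0 modnn.
have -> : (j.+1 * m.-1 = j * m + (m - j.+1))%N.
  by case: m m_gt0 ltjm => // n _ /= ltjn; rewrite mulSn mulnS subSS; lia.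
by rewrite modnMDl.
Qed.

Lemma modn_addr_eq0 k j :
  (j < m)%N -> ((k + j) %% m == 0)%N = (j == (m - k %% m) %% m)%N.
Proof.
move=> ltjm; rewrite -modnDml.
have : (k %% m < m)%N by rewrite ltn_pmod.
move: (k %% m)%N => r ltrm; case: (posnP r) => [->|r_gt0].
  by rewrite add0n subn0 modnn !modn_small.
rewrite [((m - r) %% m)%N]modn_small; last by lia.
case: (ltnP (r + j) m) => [ltrjm|lermj].
  by rewrite modn_small //; apply/eqP/eqP; lia.
rewrite -[(r + j)%N](@subnK m) // modnDr modn_small; last by lia.
by apply/eqP/eqP; lia.
Qed.

Definition eps (p : {poly F}) : F := (p %% N)`_0.

Fact eps_is_zmod_morphism : zmod_morphism eps.
Proof. by move=> a b; rewrite /eps modpD modpN coefD coefN. Qed.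
HB.instance Definition _ :=
  GRing.isZmodMorphism.Build {poly F} F eps eps_is_zmod_morphism.

Lemma eps_sum (I : Type) (r : seq I) (P : pred I) (f : I -> {poly F}) :
  eps (\sum_(i <- r | P i) f i) = \sum_(i <- r | P i) eps (f i).
Proof. exact: raddf_sum. Qed.

Lemma epsZ c p : eps (c *: p) = c * eps p.
Proof. by rewrite /eps modpZl coefZ. Qed.

Lemma eps_eqm a b : eqm a b -> eps a = eps b.
Proof. by move=> ab; rewrite /eps (eqm_modp ab). Qed.

Lemma eps_dvd p : N %| p -> eps p = 0.
Proof. by move=> Np; rewrite /eps (modp_eq0 Np) coef0. Qed.

Lemma eps_Xn k : eps 'X^k = ((k %% m)%N == 0%N)%:R.
Proof. by rewrite /eps modp_xm1_Xn coefXn eq_sym. Qed.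

Lemma poly_sumX (p : {poly F}) : (size p <= m)%N -> p = \sum_(j < m) p`_j *: 'X^j.
Proof. by move=> le_pm; rewrite -poly_def -{1}(take_poly_id le_pm). Qed.

Lemma eps_XnM k (p : {poly F}) :
  (size p <= m)%N -> eps ('X^k * p) = p`_((m - k %% m) %% m).
Proof.
move=> le_pm; rewrite {1}(poly_sumX le_pm) mulr_sumr eps_sum.
have lt_jm : ((m - k %% m) %% m < m)%N by rewrite ltn_pmod.
rewrite (bigD1 (Ordinal lt_jm)) //= big1 => [|j neq_j].
  by rewrite addr0 -scalerAr -exprD epsZ eps_Xn modn_addr_eq0 // eqxx mulr1.
rewrite -scalerAr -exprD epsZ eps_Xn modn_addr_eq0 //.
rewrite (_ : _ == _ = false) ?mulr0 //.
by apply: contraNF neq_j => /eqP eq_j; apply/eqP/val_inj.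
Qed.

Lemma hermitian_sum_eps (a b : {poly F}) : (size a <= m)%N -> (size b <= m)%N ->
  \sum_(i < m) a`_i ^+ q * b`_i = eps (tau a * b).
Proof.
move=> le_am le_bm; rewrite {2}(poly_sumX le_am) rmorph_sum mulr_suml eps_sum.
apply: eq_bigr => i _; rewrite tauZ tau_Xn -scalerAl epsZ eps_XnM //.
by rewrite muln_predm_mod // modn_oppK.
Qed.

Lemma dvd_xm1_eps (p : {poly F}) : (forall k, eps ('X^k * p) = 0) -> N %| p.
Proof.
move=> eps_p; apply/modp_eq0P/polyP => j; rewrite coef0.
have [ltjm|lemj] := ltnP j m; last by apply: (leq_sizeP _ _ (size_red p)).
have := eps_p (m - j)%N.
rewrite -(eps_eqm (eqmM (eqm_refl 'X^(m - j)) (eqm_mod p))).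
by rewrite eps_XnM ?size_red // modn_oppK.
Qed.

(** * Codewords of D3 and of its Hermitian dual *)

Definition cword (a1 a2 : {poly F}) : 'rV[F]_(m + m) :=
  row_mx (cvec m (red m a1)) (cvec m (red m a2)).

Lemma cword_rV (w : 'rV[F]_(m + m)) :
  w = cword (rVpoly (lsubmx w)) (rVpoly (rsubmx w)).
Proof.
rewrite /cword /red !modp_small ?size_xm1 ?ltnS ?size_poly //.
rewrite /cvec -[\row_i _]/(poly_rV _) -[\row_i (rVpoly _)`_i]/(poly_rV _).
by rewrite !rVpolyK hsubmxK.
Qed.

Lemma cvec_red_inj a b : cvec m (red m a) = cvec m (red m b) -> eqm a b.
Proof.
move=> /(congr1 rVpoly); rewrite !poly_rV_K ?size_red // /red => Eab.
by apply: eqm_trans (eqm_sym (eqm_mod a)) _; rewrite Eab eqm_mod.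
Qed.

Lemma hip_cword a1 a2 b1 b2 :
  hip q (m + m) (cword a1 a2) (cword b1 b2) = eps (tau a1 * b1) + eps (tau a2 * b2).
Proof.
rewrite /hip big_split_ord /=.
under eq_bigr do rewrite /cword !row_mxEl /cvec !mxE.
under [X in _ + X]eq_bigr do rewrite /cword !row_mxEr /cvec !mxE.
rewrite !hermitian_sum_eps ?size_red //.
by congr (_ + _); apply: eps_eqm; apply: eqmM (eqm_tau (eqm_mod _)) (eqm_mod _).
Qed.

Lemma hdual_cword g1 g2 v a1 a2 :
  (forall c, inQC m g1 (v * g1) (v * g2) g2 c -> hip q (m + m) (cword a1 a2) c = 0) <->
  N %| g1 * (tau a1 + v * tau a2) /\ N %| g2 * (v * tau a1 + tau a2).
Proof.
have hip_gen r1 r2 : hip q (m + m) (cword a1 a2)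
     (cword (r1 * g1 + r2 * (v * g2)) (r1 * (v * g1) + r2 * g2)) =
   eps (r1 * (g1 * (tau a1 + v * tau a2)) + r2 * (g2 * (v * tau a1 + tau a2))).
  by rewrite hip_cword -raddfD; congr eps; ring.
split=> [orth | [dvd1 dvd2] _ [r1 [r2 ->]]]; last first.
  by rewrite hip_gen eps_dvd // dvdp_add // dvdp_mull.
split; apply: dvd_xm1_eps => k.
  by have := orth _ (ex_intro _ 'X^k (ex_intro _ 0 erefl)); rewrite hip_gen mul0r addr0.
by have := orth _ (ex_intro _ 0 (ex_intro _ 'X^k erefl)); rewrite hip_gen mul0r add0r.
Qed.

Lemma inQC_cword g1 g2 v s a1 a2 :
  g1 %| N -> g2 %| N -> eqm (s * (1 - v ^+ 2)) 1 ->
  inQC m g1 (v * g1) (v * g2) g2 (cword a1 a2) <->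
  g1 %| a1 - v * a2 /\ g2 %| a2 - v * a1.
Proof.
move=> g1N g2N s_inv; split.
  move=> [r1 [r2 /eq_row_mx [/cvec_red_inj Ea1 /cvec_red_inj Ea2]]].
  have Eb1 : eqm (a1 - v * a2) (r1 * (1 - v ^+ 2) * g1).
    apply: eqm_trans (eqmB Ea1 (eqmM (eqm_refl v) Ea2)) _.
    by rewrite (_ : _ - _ = r1 * (1 - v ^+ 2) * g1) ?eqm_refl //; ring.
  have Eb2 : eqm (a2 - v * a1) (r2 * (1 - v ^+ 2) * g2).
    apply: eqm_trans (eqmB Ea2 (eqmM (eqm_refl v) Ea1)) _.
    by rewrite (_ : _ - _ = r2 * (1 - v ^+ 2) * g2) ?eqm_refl //; ring.
  by rewrite (eqm_dvdp g1N Eb1) (eqm_dvdp g2N Eb2) !dvdp_mulIr.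
move=> [/dvdpP [k1 Ek1] /dvdpP [k2 Ek2]].
have s_invM a : eqm a (s * (1 - v ^+ 2) * a).
  by rewrite -{1}[a]mul1r; apply/eqmM/eqm_refl/eqm_sym.
exists (s * k1), (s * k2); congr row_mx; congr (cvec m); apply: eqm_modp.
  have -> : s * k1 * g1 + s * k2 * (v * g2) = s * (k1 * g1) + s * v * (k2 * g2) by ring.
  rewrite -Ek1 -Ek2 (_ : _ + _ = s * (1 - v ^+ 2) * a1); last by ring.
  exact: s_invM.
have -> : s * k1 * (v * g1) + s * k2 * g2 = s * v * (k1 * g1) + s * (k2 * g2) by ring.
rewrite -Ek1 -Ek2 (_ : _ + _ = s * (1 - v ^+ 2) * a2); last by ring.
exact: s_invM.
Qed.

Lemma herm_dual_containing_cword g1 g2 v s :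
  g1 %| N -> g2 %| N -> eqm (s * (1 - v ^+ 2)) 1 ->
  herm_dual_containing q (m + m) (inQC m g1 (v * g1) (v * g2) g2) <->
  (forall a1 a2,
     N %| g1 * (tau a1 + v * tau a2) -> N %| g2 * (v * tau a1 + tau a2) ->
     g1 %| a1 - v * a2 /\ g2 %| a2 - v * a1).
Proof.
move=> g1N g2N s_inv; split=> [hdc a1 a2 dvd1 dvd2 | code w].
  by apply/(inQC_cword _ _ g1N g2N s_inv)/hdc/hdual_cword.
rewrite [w]cword_rV => /hdual_cword [dvd1 dvd2].
by apply/(inQC_cword _ _ g1N g2N s_inv); apply: code.
Qed.

(** * The dual-containing criterion *)

Lemma dvd_xm1_factorM g h : g * h = N -> forall Y, (N %| g * Y) = (h %| Y).
Proof.
move=> Egh Y; have g_neq0 : g != 0.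
  by apply: contraNneq xm1_neq0 => g0; rewrite -Egh g0 mul0r.
by rewrite -Egh dvdp_mul2l.
Qed.

Lemma dvdp_cofactor g Y : g %| N -> (g %| Y) = (N %| (N %/ g) * Y).
Proof. by move=> gN; rewrite (@dvd_xm1_factorM _ g) // mulrC divpKC. Qed.

Lemma dvd_xm1_unitM s t : eqm (s * t) 1 -> forall Y, (N %| t * Y) = (N %| Y).
Proof.
move=> st1 Y; apply/idP/idP => [dvd_tY|]; last exact: dvdp_mull.
by rewrite -[Y]mul1r -(eqm_dvd (eqmM st1 (eqm_refl Y))) -mulrA dvdp_mull.
Qed.

Lemma dvdp_code_tau g v u : g %| N -> eqm u (tau v) -> forall a1 a2,
  (g %| a1 - v * a2) = (N %| tau (N %/ g) * (tau a1 - u * tau a2)).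
Proof.
move=> gN u_tau a1 a2; rewrite dvdp_cofactor // -dvd_xm1_tau.
rewrite rmorphM rmorphB rmorphM; apply: eqm_dvd.
exact: eqmM (eqm_refl _) (eqmB (eqm_refl _) (eqmM (eqm_sym u_tau) (eqm_refl _))).
Qed.

Section DualCriterion.
Variables g1 g2 v u s : {poly F}.
Hypotheses (g1N : g1 %| N) (g2N : g2 %| N).
Hypotheses (u_tau : eqm u (tau v)) (s_inv : eqm (s * (1 - v ^+ 2)) 1).
Local Notation h1 := (N %/ g1).
Local Notation h2 := (N %/ g2).

(* b_i stands for tau a_i, tau being an involution modulo N. *)
Lemma code_condition_tau :
  (forall a1 a2,
     N %| g1 * (tau a1 + v * tau a2) -> N %| g2 * (v * tau a1 + tau a2) ->
     g1 %| a1 - v * a2 /\ g2 %| a2 - v * a1) <->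
  (forall b1 b2, h1 %| b1 + v * b2 -> h2 %| v * b1 + b2 ->
     N %| tau h1 * (b1 - u * b2) /\ N %| tau h2 * (b2 - u * b1)).
Proof.
have h1N : h1 %| N by rewrite -{2}(divpKC g1N) dvdp_mulIr.
have h2N : h2 %| N by rewrite -{2}(divpKC g2N) dvdp_mulIr.
have dvd_g1 := dvd_xm1_factorM (divpKC g1N).
have dvd_g2 := dvd_xm1_factorM (divpKC g2N).
have code_tau := (dvdp_code_tau g1N u_tau, dvdp_code_tau g2N u_tau).
split=> [code b1 b2 dvd1 dvd2 | code a1 a2]; last first.
  by rewrite dvd_g1 dvd_g2 !code_tau; apply: code.
have tauK1 := tauK_eqm b1; have tauK2 := tauK_eqm b2.
have [] : g1 %| tau b1 - v * tau b2 /\ g2 %| tau b2 - v * tau b1.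
  apply: code.
    by rewrite dvd_g1 (eqm_dvdp h1N (eqmD tauK1 (eqmM (eqm_refl v) tauK2))).
  by rewrite dvd_g2 (eqm_dvdp h2N (eqmD (eqmM (eqm_refl v) tauK1) tauK2)).
rewrite !code_tau.
rewrite (eqm_dvd (eqmM (eqm_refl _) (eqmB tauK1 (eqmM (eqm_refl u) tauK2)))).
rewrite (eqm_dvd (eqmM (eqm_refl _) (eqmB tauK2 (eqmM (eqm_refl u) tauK1)))).
exact: conj.
Qed.

(* The pairs b on the left are the combinations of s h1 (1, -v) and
   s h2 (-v, 1). *)
Lemma code_condition_generators :
  (forall b1 b2, h1 %| b1 + v * b2 -> h2 %| v * b1 + b2 ->
     N %| tau h1 * (b1 - u * b2) /\ N %| tau h2 * (b2 - u * b1)) <->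
  [/\ N %| tau h1 * (h1 * (1 + v * u)), N %| tau h2 * (h1 * (u + v))
     & N %| tau h2 * (h2 * (1 + v * u))].
Proof.
have dvd_unit := dvd_xm1_unitM s_inv.
have dvd_unit' : forall Y, (N %| s * Y) = (N %| Y).
  by apply: (@dvd_xm1_unitM (1 - v ^+ 2)); rewrite mulrC.
split=> [code | [C1 C2 C3] b1 b2 /dvdpP [c1 Eb1] /dvdpP [c2 Eb2]].
  have [D1 D2] : N %| tau h1 * (s * h1 - u * - (s * v * h1)) /\
                 N %| tau h2 * (- (s * v * h1) - u * (s * h1)).
    apply: code; last by rewrite (_ : _ + _ = 0) ?dvdp0 //; ring.
    by rewrite (_ : _ + _ = s * (1 - v ^+ 2) * h1) ?dvdp_mulIr //; ring.
  have [_ D3] : N %| tau h1 * (- (s * v * h2) - u * (s * h2)) /\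
                N %| tau h2 * (s * h2 - u * - (s * v * h2)).
    apply: code; first by rewrite (_ : _ + _ = 0) ?dvdp0 //; ring.
    by rewrite (_ : _ + _ = s * (1 - v ^+ 2) * h2) ?dvdp_mulIr //; ring.
  split; rewrite -dvd_unit'.
  - by rewrite (_ : s * _ = tau h1 * (s * h1 - u * - (s * v * h1))) //; ring.
  - rewrite -dvdpNr (_ : - _ = tau h2 * (- (s * v * h1) - u * (s * h1))) //.
    by ring.
  - by rewrite (_ : s * _ = tau h2 * (s * h2 - u * - (s * v * h2))) //; ring.
have C2' : N %| tau h1 * (h2 * (u + v)).
  have tau_u : eqm (tau u) v := eqm_trans (eqm_tau u_tau) (tauK_eqm v).
  move: C2; rewrite -dvd_xm1_tau !rmorphM rmorphD.
  have tau_uv : eqm (tau u + tau v) (v + u) := eqmD tau_u (eqm_sym u_tau).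
  rewrite (eqm_dvd (eqmM (tauK_eqm h2) (eqmM (eqm_refl _) tau_uv))).
  by rewrite mulrCA addrC.
split; rewrite -dvd_unit.
  have -> : (1 - v ^+ 2) * (tau h1 * (b1 - u * b2)) =
      (b1 + v * b2) * (tau h1 * (1 + v * u)) -
      (v * b1 + b2) * (tau h1 * (u + v)) by ring.
  by rewrite Eb1 Eb2 -!mulrA dvdp_sub // dvdp_mull // mulrCA.
have -> : (1 - v ^+ 2) * (tau h2 * (b2 - u * b1)) =
    (v * b1 + b2) * (tau h2 * (1 + v * u)) -
    (b1 + v * b2) * (tau h2 * (u + v)) by ring.
by rewrite Eb1 Eb2 -!mulrA dvdp_sub // dvdp_mull // mulrCA.
Qed.

End DualCriterion.

(** * Hermitian duals of divisors of x^m - 1 *)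

Lemma recipZ c (f : {poly F}) : c != 0 -> recip (c *: f) = c *: recip f.
Proof.
move=> c_neq0; rewrite /recip size_scale //; apply/polyP => i.
by rewrite coefZ !coef_poly; case: ifP; rewrite ?coefZ ?mulr0.
Qed.

Lemma recip_eqm f : eqm (recip f) ('X^((size f).-1) * (f \Po 'X^(m.-1))).
Proof.
rewrite /recip poly_def comp_polyE mulr_sumr (reindex_inj rev_ord_inj) /=.
apply: eqm_sum => i _; have lt_if : (i < size f)%N := ltn_ord i.
rewrite (_ : (size f).-1 - (size f - i.+1) = i)%N; last by lia.
rewrite -scalerAr -exprM -exprD; apply/eqmZ/eqm_Xn.
rewrite (_ : (size f).-1 + m.-1 * i = i * m + (size f - i.+1))%N ?modnMDl //.
move: lt_if; case: m m_gt0 => // n _ /= lt_if.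
by rewrite mulnS (mulnC n i); lia.
Qed.

Lemma dvd_xm1_XnM k Y : (N %| 'X^k * Y) = (N %| Y).
Proof.
apply/Gauss_dvdpr/coprimep_expr; rewrite coprimepX /root /xm1.
by rewrite !hornerE expr0n gtn_eqF // sub0r oppr_eq0 oner_eq0.
Qed.

Lemma perpH_scale g : g %| N ->
  exists2 c : F, c != 0 & perpH q m g = c *: recip (map_poly frob (N %/ g)).
Proof.
move=> gN; set G := map_poly frob g; set H := map_poly frob (N %/ g).
have NGH : N = G * H by rewrite -map_frob_xm1 -{1}(divpKC gN) rmorphM.
have G_neq0 : G != 0 by apply: contraNneq xm1_neq0 => G0; rewrite NGH G0 mul0r.
have H0_neq0 : H`_0 != 0.
  apply/eqP => H0; have := congr1 (coefp 0) NGH.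
  rewrite /= coef0M H0 mulr0 /xm1 coefB coefXn coef1 eq_sym eqn0Ngt m_gt0 /= sub0r.
  by move/eqP; rewrite oppr_eq0 oner_eq0.
have : N %/ gcdp G N %= H.
  apply: eqp_trans (eqp_divr N (dvdp_gcd_idl _)) _; first by rewrite NGH dvdp_mulIl.
  by rewrite [X in X %/ G]NGH mulKp ?eqpxx.
case/eqpP=> [[c1 c2] /= /andP [c1_neq0 c2_neq0] Ec].
have c_neq0 : c2 / c1 != 0 by rewrite mulf_neq0 ?invr_eq0.
have -> : perpH q m g = ((N %/ gcdp G N)`_0)^-1 *: recip (N %/ gcdp G N) by [].
have -> : N %/ gcdp G N = (c2 / c1) *: H.
  by rewrite mulrC -scalerA -Ec scalerA mulVf // scale1r.
exists ((c2 / c1 * H`_0)^-1 * (c2 / c1)).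
  by apply: mulf_neq0 => //; rewrite invr_eq0 mulf_neq0.
by rewrite coefZ recipZ // scalerA.
Qed.

Lemma dvd_xm1_perpHM g Y :
  g %| N -> (N %| perpH q m g * Y) = (N %| tau (N %/ g) * Y).
Proof.
move=> /perpH_scale [c c_neq0 ->]; rewrite -scalerAl dvdpZr //.
rewrite (eqm_dvd (eqmM (recip_eqm _) (eqm_refl Y))) -mulrA dvd_xm1_XnM.
by rewrite tauE map_comp_poly map_polyXn.
Qed.

Lemma dvdp_red_perpHM g g' Y : g %| N -> g' %| N ->
  (g %| red m (perpH q m g' * Y)) = (N %| tau (N %/ g') * ((N %/ g) * Y)).
Proof.
move=> gN g'N; rewrite /red -(dvdp_mod _ gN) dvdp_cofactor // mulrCA.
exact: dvd_xm1_perpHM.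
Qed.

Definition ord_opp (i : 'I_m) : 'I_m := Ordinal (ltn_pmod (m - i) m_gt0).

Lemma ord_oppK : involutive ord_opp.
Proof. by move=> i; apply/val_inj; rewrite /= modn_oppK. Qed.

Lemma barp_eqm v : eqm (barp m v) (v \Po 'X^(m.-1)).
Proof.
apply: eqm_trans (eqm_comp_polyXn _ (eqm_mod v)).
rewrite /barp poly_def -/(red m v) {2}(poly_sumX (size_red v)) linear_sum /=.
rewrite (reindex_inj (can_inj ord_oppK)) /=; apply: eqm_sum => i _.
rewrite modn_oppK // linearZ /= comp_Xn_poly -exprM; apply/eqmZ/eqm_Xn.
by rewrite modn_mod mulnC muln_predm_mod.
Qed.

Lemma frobp_barp_eqm v : eqm (frobp q (barp m v)) (tau v).
Proof. exact/eqm_map_frob/barp_eqm. Qed.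

Lemma herm_dual_containing_iff g1 g2 v :
  g1 %| N -> g2 %| N -> coprimep (v ^+ 2 - 1) N ->
  herm_dual_containing q (m + m) (inQC m g1 (v * g1) (v * g2) g2) <->
  [/\ g1 %| red m (perpH q m g1 * (1 + v * frobp q (barp m v))),
      g1 %| red m (perpH q m g2 * (frobp q (barp m v) + v))
    & g2 %| red m (perpH q m g2 * (1 + v * frobp q (barp m v)))].
Proof.
move=> g1N g2N /Bezout_eq1_coprimepP [[s t] /= Est].
have s_inv : eqm (- s * (1 - v ^+ 2)) 1.
  rewrite /eqm (_ : _ - 1 = s * (v ^+ 2 - 1) + t * N - 1 - t * N); last by ring.
  by rewrite Est subrr sub0r dvdpNr dvdp_mulIr.
rewrite !dvdp_red_perpHM // (herm_dual_containing_cword g1N g2N s_inv).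
rewrite (code_condition_tau g1N g2N (frobp_barp_eqm v)).
exact: code_condition_generators (frobp_barp_eqm v) s_inv.
Qed.

End HermitianQC.

Lemma frobenius_of_card_sqr q (F : finFieldType) :
  prime_power q -> #|F| = (q ^ 2)%N ->
  (forall a b : F, (a + b) ^+ q = a ^+ q + b ^+ q) /\ (forall a : F, (a ^+ q) ^+ q = a).
Proof.
case=> p [k [p_pr [_ ->]]] cardF.
have pF : p \in [pchar F].
  by apply: (@card_finPcharP _ p (k * 2)) => //; rewrite cardF expnM.
split=> [a b | a]; last by rewrite -exprM mulnn -cardF expf_card.
by apply: exprDn_pchar; rewrite (eq_pnat _ (pcharf_eq pF)) pnatX pnat_id.
Qed.

Theorem mainTheorem12 (q : nat) (Hq : prime_power q)
  (F : finFieldType) (HF : #|F| = (q ^ 2)%N)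
  (m : nat) (Hm : (0 < m)%N)
  (g1 g2 v : {poly F})
  (Hg1m : g1 \is monic) (Hg1d : g1 %| xm1 m)
  (Hg2m : g2 \is monic) (Hg2d : g2 %| xm1 m)
  (Hv : (size v <= m)%N)
  (Hcop : coprimep (v ^+ 2 - 1) (xm1 m)) :
  herm_dual_containing q (m + m) (inQC m g1 (v * g1) (v * g2) g2)
  <->
  [/\ g1 %| red m (perpH q m g1 * (1 + v * frobp q (barp m v))),
      g1 %| red m (perpH q m g2 * (frobp q (barp m v) + v))
    & g2 %| red m (perpH q m g2 * (1 + v * frobp q (barp m v)))].
Proof.
have [frobD frobK] := frobenius_of_card_sqr Hq HF.
exact: herm_dual_containing_iff frobD frobK Hm _ _ _ Hg1d Hg2d Hcop.
Qed.
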